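(* Let $\Gamma$ be a bipartite graph with vertex partition $V(\Gamma)=X\cup Y$, $X=\{x_1,\dots,x_{|X|}\}$ nonempty. Suppose that $d(x_i)=s_i$ for $1\le i\le |X|$, that $d(y)=k$ for all $y\in Y$, and that every pair of distinct vertices $y_1,y_2\in Y$ with $d_\Gamma(y_1,y_2)=2$ has exactly $\mu$ common neighbours. Then $$(|Y|-1)\mu\ \ge\ k\left(\frac{|Y|\cdot k}{|X|}-1\right),$$ with equality if and only if $s_1=s_2=\cdots=s_{|X|}$ and every pair of distinct vertices of $Y$ is at distance $2$.
   Context: $d(v)$ denotes the valency of a vertex $v$ and $d_\Gamma(\cdot,\cdot)$ the distance in $\Gamma$. *)

From mathcomp Require Import all_boot all_order all_algebra.
Set Implicit Arguments. Unset Strict Implicit. Unset Printing Implicit Defensive.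
Import Order.TTheory GRing.Theory Num.Theory.

Definition simple_graph (T : finType) (e : rel T) : Prop :=
  symmetric e /\ irreflexive e.

Definition deg (T : finType) (e : rel T) (v : T) : nat := #|[set z | e v z]|.

Definition ncommon (T : finType) (e : rel T) (u v : T) : nat :=
  #|[set z | e u z && e v z]|.

Definition walk_len (T : finType) (e : rel T) (u v : T) (n : nat) : Prop :=
  exists p : seq T, [/\ path e u p, last u p = v & size p = n].

Definition dist_is (T : finType) (e : rel T) (u v : T) (n : nat) : Prop :=
  walk_len e u v n /\ forall m, (m < n)%N -> ~ walk_len e u v m.

Definition bipartition (T : finType) (e : rel T) (X Y : {set T}) : Prop :=
  [/\ [disjoint X & Y], X :|: Y = [set: T] &
      forall u v, e u v -> (u \in X) = (v \in Y)].

From mathcomp Require Import all_boot all_order all_algebra.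
From mathcomp Require Import ring.
Set Implicit Arguments.
Unset Strict Implicit.
Unset Printing Implicit Defensive.

Import Order.TTheory GRing.Theory Num.Theory.
Local Open Scope ring_scope.

(* Double counting the paths y1 - x - y2 with y1, y2 in Y gives
   sum_(x in X) d(x)^2 = sum_(y1, y2 in Y) |N(y1) :&: N(y2)|, and each term on the
   right is k on the diagonal and at most mu off it (either 0, or mu when the pair
   is at distance 2), so sum d(x)^2 <= |Y| (k + (|Y| - 1) mu).  Since
   sum_(x in X) d(x) = |Y| k, Cauchy-Schwarz gives (|Y| k)^2 <= |X| sum d(x)^2.
   Chaining the two inequalities yields the bound; equality holds iff both are
   tight, i.e. iff the d(x) are constant and every pair of Y has a common
   neighbour. *)

Lemma sum_sqr_diff (R : comPzRingType) (I : finType) (A : {pred I}) (F : I -> R) :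
  \sum_(i in A) \sum_(j in A) (F i - F j) ^+ 2 =
  (#|A|%:R * \sum_(i in A) F i ^+ 2 - (\sum_(i in A) F i) ^+ 2) *+ 2.
Proof.
transitivity (\sum_(i in A) (#|A|%:R * F i ^+ 2 + \sum_(j in A) F j ^+ 2
                 - 2 * F i * \sum_(j in A) F j)).
  apply: eq_bigr => i _.
  rewrite mulr_sumr mulr_natl -sumr_const -!big_split -sumrB /=.
  by apply: eq_bigr => j _; ring.
rewrite sumrB big_split /= -mulr_sumr sumr_const -mulr_natr -mulr_suml -mulr_natr -mulr_sumr.
ring.
Qed.

Lemma leif_sqr_sum (R : realDomainType) (I : finType) (A : {pred I}) (F : I -> R) :
  (\sum_(i in A) F i) ^+ 2 <= #|A|%:R * \sum_(i in A) F i ^+ 2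
    ?= iff [forall i in A, forall j in A, F i == F j].
Proof.
have sqr_leif i j : 0 <= (F i - F j) ^+ 2 ?= iff (F i == F j).
  by rewrite -subr_eq0 -sqrf_eq0 eq_sym; apply/leif_eq/sqr_ge0.
have := @leif_0_sum _ _ (fun i => i \in A) _ _
  (fun i _ => @leif_0_sum _ _ (fun j => j \in A) _ _ (fun j _ => sqr_leif i j)).
rewrite sum_sqr_diff -[X in X <= _ ?= iff _](mul0rn _ 2) (mono_leif (ler_pMn2r _)) //.
by rewrite leifBRL add0r.
Qed.

Lemma card_set_sum (T : finType) (A : {pred T}) (P : pred T) :
  (forall z, P z -> z \in A) -> #|[set z | P z]| = (\sum_(z in A) P z)%N.
Proof.
move=> PA; rewrite -sum1_card big_mkcond [RHS]big_mkcond /=.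
apply: eq_bigr => z _; rewrite inE.
by case: (boolP (P z)) => [/PA -> | _]; last by case: (z \in A).
Qed.

Lemma constant_inP (I : finType) (T : eqType) (A : {pred I}) (f : I -> T) :
  reflect {in A &, forall i j, f i = f j} [forall i in A, forall j in A, f i == f j].
Proof.
apply: (iffP forall_inP) => [fA i j iA jA | fA i iA].
  by apply/eqP; move/forall_inP: (fA i iA); apply.
by apply/forall_inP => j jA; apply/eqP/fA.
Qed.

Lemma ncommon_id (T : finType) (e : rel T) (v : T) : ncommon e v v = deg e v.
Proof. by apply: eq_card => z; rewrite !inE andbb. Qed.

Section Bipartite.

Variables (T : finType) (e : rel T) (X Y : {set T}).
Hypotheses (e_sym : symmetric e) (eXY : bipartition e X Y).

Lemma adj_XY x z : x \in X -> e x z -> z \in Y.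
Proof. by case: eXY => _ _ bip xX /bip <-. Qed.

Lemma adj_YX y z : y \in Y -> e y z -> z \in X.
Proof. by case: eXY => _ _ bip yY; rewrite e_sym => /bip ->. Qed.

Lemma deg_sum_Y x : x \in X -> deg e x = (\sum_(y in Y) e x y)%N.
Proof. by move=> xX; apply: card_set_sum => z; apply: adj_XY. Qed.

Lemma deg_sum_X y : y \in Y -> deg e y = (\sum_(x in X) e y x)%N.
Proof. by move=> yY; apply: card_set_sum => z; apply: adj_YX. Qed.

Lemma ncommon_sum y1 y2 :
  y1 \in Y -> ncommon e y1 y2 = (\sum_(x in X) (e y1 x && e y2 x))%N.
Proof. by move=> y1Y; apply: card_set_sum => z /andP[+ _]; apply: adj_YX. Qed.

Lemma sum_deg_XY : (\sum_(x in X) deg e x = \sum_(y in Y) deg e y)%N.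
Proof.
under eq_bigr => x xX do rewrite deg_sum_Y //.
rewrite exchange_big; apply: eq_bigr => y yY.
by rewrite deg_sum_X //; apply: eq_bigr => x _; rewrite e_sym.
Qed.

Lemma sum_ncommon :
  (\sum_(y1 in Y) \sum_(y2 in Y) ncommon e y1 y2 = \sum_(x in X) deg e x ^ 2)%N.
Proof.
transitivity (\sum_(x in X) \sum_(y1 in Y) \sum_(y2 in Y) e y1 x * e y2 x)%N.
  rewrite [RHS]exchange_big; apply: eq_bigr => y1 y1Y.
  rewrite [RHS]exchange_big; apply: eq_bigr => y2 _; rewrite ncommon_sum //.
  by apply: eq_bigr => x _; case: (e y1 x); case: (e y2 x).
apply: eq_bigr => x xX; rewrite -big_distrlr /= deg_sum_Y // -mulnn.
by congr (_ * _)%N; apply: eq_bigr => y _; rewrite e_sym.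
Qed.

Lemma dist2_ncommon_gt0 y1 y2 : y1 \in Y -> y2 \in Y -> y1 != y2 ->
  dist_is e y1 y2 2 <-> (0 < ncommon e y1 y2)%N.
Proof.
move=> y1Y y2Y y12; split.
  case=> -[p [walk_p last_p size_p]] _.
  case: p walk_p last_p size_p => [|z [|w []]] //= /and3P[e1z ezw _] <- _.
  by apply/card_gt0P; exists z; rewrite inE e1z e_sym ezw.
case/card_gt0P=> z; rewrite inE => /andP[e1z e2z]; split.
  by exists [:: z; y2]; rewrite /= e1z e_sym e2z.
case=> [|[|//]] _ [p [walk_p last_p size_p]].
  by move: last_p y12; rewrite (size0nil size_p) => /= ->; rewrite eqxx.
case: p walk_p last_p size_p => [|w []] //= /andP[e1w _] w_y2 _.
have := adj_YX y1Y e1w; rewrite w_y2.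
by case: eXY => dis _ _; rewrite (disjointFl dis y2Y).
Qed.

Lemma dist2_allP :
  reflect (forall y1 y2, y1 \in Y -> y2 \in Y -> y1 != y2 -> dist_is e y1 y2 2)
          [forall y1 in Y, forall y2 in Y, (y1 == y2) || (0 < ncommon e y1 y2)%N].
Proof.
apply: (iffP forall_inP) => [all12 y1 y2 y1Y y2Y y12 | dist2 y1 y1Y].
  apply/dist2_ncommon_gt0 => //.
  by move/forall_inP/(_ y2 y2Y): (all12 y1 y1Y); rewrite (negbTE y12).
apply/forall_inP => y2 y2Y; case: eqVneq => //= y12.
by apply/dist2_ncommon_gt0 => //; apply: dist2.
Qed.

Variables k mu : nat.
Hypotheses (mu_gt0 : (0 < mu)%N) (degY : {in Y, forall y, deg e y = k}).
Hypothesis ncommon_dist2 : forall y1 y2, y1 \in Y -> y2 \in Y -> y1 != y2 ->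
  dist_is e y1 y2 2 -> ncommon e y1 y2 = mu.

Lemma leqif_ncommon y1 y2 : y1 \in Y -> y2 \in Y ->
  (ncommon e y1 y2 <= (if y1 == y2 then k else mu)
     ?= iff (y1 == y2) || (0 < ncommon e y1 y2))%N.
Proof.
move=> y1Y y2Y; have [<-|y12] := eqVneq y1 y2.
  by rewrite ncommon_id degY //; apply: leqif_refl.
(* Without a common neighbour the bound 0 <= mu is strict, as mu > 0. *)
have [->|nc_gt0] := posnP (ncommon e y1 y2).
  by split; rewrite // eq_sym gtn_eqF.
by rewrite ncommon_dist2 //; [apply: leqif_refl | apply/dist2_ncommon_gt0].
Qed.

Lemma leqif_sum_sqr_deg :
  (\sum_(x in X) deg e x ^ 2 <= #|Y| * (k + #|Y|.-1 * mu)
     ?= iff [forall y1 in Y, forall y2 in Y, (y1 == y2) || (0 < ncommon e y1 y2)])%N.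
Proof.
have -> : (#|Y| * (k + #|Y|.-1 * mu) =
           \sum_(y1 in Y) \sum_(y2 in Y) if y1 == y2 then k else mu)%N.
  rewrite -sum_nat_const; apply: eq_bigr => y1 y1Y.
  rewrite (bigD1 y1) //= eqxx (cardD1 y1) y1Y -sum_nat_const.
  congr (_ + _)%N; symmetry.
  apply: eq_big => [y2 | y2 /andP[_ y21]]; first by rewrite !inE andbC.
  by rewrite eq_sym (negbTE y21).
rewrite -sum_ncommon; apply: leqif_sum => y1 y1Y; apply: leqif_sum => y2 y2Y.
exact: leqif_ncommon.
Qed.

Lemma leif_mu_lower_bound (R : realFieldType) : X != set0 -> Y != set0 ->
  k%:R * (#|Y|%:R * k%:R / #|X|%:R - 1) <= (#|Y|%:R - 1) * mu%:R
    ?= iff [forall x1 in X, forall x2 in X, deg e x1 == deg e x2]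
        && [forall y1 in Y, forall y2 in Y, (y1 == y2) || (0 < ncommon e y1 y2)%N]
    :> R.
Proof.
rewrite -!card_gt0 => X_gt0 Y_gt0.
set n : R := #|X|%:R; set m : R := #|Y|%:R.
have n_gt0 : 0 < n by rewrite ltr0n.
have m_gt0 : 0 < m by rewrite ltr0n.
have cauchy_schwarz := leif_sqr_sum X (fun x => (deg e x)%:R : R).
rewrite -natr_sum sum_deg_XY (eq_bigr _ degY) sum_nat_const in cauchy_schwarz.
have -> : [forall x1 in X, forall x2 in X, deg e x1 == deg e x2]
        = [forall x1 in X, forall x2 in X, (deg e x1)%:R == (deg e x2)%:R :> R].
  by apply: eq_forallb_in => x1 _; apply: eq_forallb_in => x2 _; rewrite eqr_nat.
have counting := leqif_sum_sqr_deg.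
rewrite -(leif_nat_r R) natr_sum (eq_bigr _ (fun x _ => natrX _ _ _)) in counting.
rewrite -(mono_leif (ler_pM2l n_gt0)) in counting.
have mn_gt0 : 0 < m * n by rewrite mulr_gt0.
rewrite -(mono_leif (lerD2r k%:R)) -(mono_leif (ler_pM2r mn_gt0)).
have Ym1 : (#|Y|.-1)%:R = m - 1 by rewrite -subn1 natrB.
have -> : (k%:R * (m * k%:R / n - 1) + k%:R) * (m * n) = (#|Y| * k)%:R ^+ 2.
  by rewrite natrM -/m; field; rewrite gt_eqF.
have -> : ((m - 1) * mu%:R + k%:R) * (m * n) = n * (#|Y| * (k + #|Y|.-1 * mu))%:R.
  by rewrite natrM natrD natrM Ym1 -/m; ring.
exact: leif_trans cauchy_schwarz counting.
Qed.

End Bipartite.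

Theorem lemma3p2 (T : finType) (e : rel T) (X Y : {set T}) (k mu : nat) :
  simple_graph e -> bipartition e X Y ->
  X != set0 -> Y != set0 -> (0 < mu)%N ->
  (forall y, y \in Y -> deg e y = k) ->
  (forall y1 y2, y1 \in Y -> y2 \in Y -> y1 != y2 -> dist_is e y1 y2 2 ->
     ncommon e y1 y2 = mu) ->
  let lhs : rat := (#|Y|%:R - 1) * mu%:R in
  let rhs : rat := k%:R * (#|Y|%:R * k%:R / #|X|%:R - 1) in
  lhs >= rhs /\
  (lhs = rhs <->
     ((forall x1 x2, x1 \in X -> x2 \in X -> deg e x1 = deg e x2) /\
      (forall y1 y2, y1 \in Y -> y2 \in Y -> y1 != y2 -> dist_is e y1 y2 2))).
Proof.
move=> [e_sym _] eXY XN YN mu_gt0 degY ncY lhs rhs.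
have [le_rhs_lhs eq_rhs_lhs] := leif_mu_lower_bound e_sym eXY mu_gt0 degY ncY rat XN YN.
have dist2P := dist2_allP e_sym eXY.
split=> //; rewrite (rwP eqP) eq_sym eq_rhs_lhs.
split=> [/andP[/constant_inP ? /dist2P ?] | [/constant_inP ? /dist2P ?]] //.
exact/andP.
Qed.
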